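(* There is a constant $\Delta_2>0$ (depending only on $r$) such that for every $\eta>0$ there is $\varepsilon_5=\varepsilon_5(\eta)>0$ with the following property: for all large enough $n$, every $m<\varepsilon_5 n$, every $U\subset V_n$ with $|U|=m$ and every $u\in(\eta,r]$ (with $\mathbb P(e(U,U^c)=u|U|)>0$), (i) $\mathbb P\big(|\partial U|\le(u-\eta)|U|\ \big|\ e(U,U^c)=u|U|\big)\le\exp(-\eta m\log(n/m)+\Delta_2 m)$; (ii) $\mathbb P\big(e(U,U^c)-|\partial U|>\eta|U|\big)\le\exp(-\eta m\log(n/m)+\Delta_2 m)$.
   Context: Fix an integer $r\ge3$, let $V_n=\{1,\dots,n\}$ with $rn$ even, and let $\mathbb P$ be the law of the random multigraph $G_n$ on $V_n$ obtained by giving each vertex $r$ half-edges and pairing all $rn$ half-edges uniformly at random. Write $y\sim x$ if $y$ and $x$ are joined by an edge of $G_n$. For $U\subset V_n$: $e(U,U^c)$ is the number of edges (pairs of matched half-edges) with one endpoint in $U$ and the other in $U^c$, and $\partial U:=\{y\in U^c: y\sim x\text{ for some }x\in U\}$. *)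

From mathcomp Require Import all_boot all_order all_fingroup all_algebra.
From mathcomp Require Import reals sequences exp.
Set Implicit Arguments. Unset Strict Implicit. Unset Printing Implicit Defensive.
Import Order.TTheory GRing.Theory Num.Theory.
Local Open Scope ring_scope.

(* Half-edges of the configuration model on V_n = 'I_n (vertices 0..n-1,
   standing for 1..n): vertex v carries the r half-edges (v, j), j < r. *)
Definition half (n r : nat) : finType := ('I_n * 'I_r)%type.

Definition is_pairing (n r : nat) (p : {perm half n r}) : bool :=
  [forall x, (p (p x) == x) && (p x != x)].

Definition pairings (n r : nat) : {set {perm half n r}} :=
  [set p | is_pairing p].

Definition prob (R : realType) (n r : nat) (E : pred {perm half n r}) : R :=
  #|[set p in pairings n r | E p]|%:R / #|pairings n r|%:R.

Definition cprob (R : realType) (n r : nat) (E F : pred {perm half n r}) : R :=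
  #|[set p in pairings n r | E p && F p]|%:R /
  #|[set p in pairings n r | F p]|%:R.

(* e(U,U^c): number of edges with one endpoint in U and the other outside U;
   each such edge is counted once via its half-edge lying at a vertex of U. *)
Definition eout (n r : nat) (p : {perm half n r}) (U : {set 'I_n}) : nat :=
  #|[set x : half n r | (x.1 \in U) && ((p x).1 \notin U)]|.

Definition bdry (n r : nat) (p : {perm half n r}) (U : {set 'I_n}) : {set 'I_n} :=
  [set y | (y \notin U) &&
           [exists x : half n r, (x.1 \in U) && ((p x).1 == y)]].

From Pilot Require Import Defs.
From mathcomp Require Import all_boot all_order all_fingroup all_algebra.
From mathcomp Require Import reals sequences exp.
From mathcomp Require Import zify ring lra.
Import Pilot.Defs.
Import Order.TTheory GRing.Theory Num.Theory.
Set Implicit Arguments. Unset Strict Implicit. Unset Printing Implicit Defensive.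

(* Let Z be the set of half-edges outside U that are matched into U, so that
   e(U, U^c) = |Z| and the boundary of U is the set of owners of Z.
   Conjugating a pairing by the transposition of two half-edges outside U
   moves Z along that transposition, hence the number of pairings with a
   given Z = W depends only on |W|: given e(U, U^c) = k, the set Z is a
   uniform k-subset of the (n - m) r outside half-edges.  A k-set owned by
   j vertices is chosen in at most C(n, j) 2^(j r) ways, and if
   k - j >= eta m this is at most e^(O(m)) (r m / n)^(eta m) C((n - m) r, k).
   Part (ii) follows by summing the conditional bound over k. *)

Lemma permJE (T : finType) (p s : {perm T}) x : (p ^ s)%g x = s (p ((s^-1)%g x)).
Proof. by rewrite -{1}(permKV s x) permJ. Qed.

Lemma mem_imset_tperm (T : finType) (a b y : T) (W : {set T}) :
  (y \in tperm a b @: W) = (tperm a b y \in W).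
Proof. by rewrite -{1}(tpermK a b y) mem_imset //; exact: perm_inj. Qed.

Lemma imset_tpermK (T : finType) (a b : T) : involutive (fun W : {set T} => tperm a b @: W).
Proof. by move=> W; apply/setP => y; rewrite !mem_imset_tperm tpermK. Qed.

Section CrossingHalfEdges.

Variables (n r : nat) (U : {set 'I_n}).
Implicit Types (p s : {perm half n r}) (W : {set half n r}).

Definition out_half : {set half n r} := [set x | x.1 \notin U].

Definition crossing p : {set half n r} := [set y | (y.1 \notin U) && ((p y).1 \in U)].

Definition owners W : {set 'I_n} := [set y.1 | y in W].

Definition crossing_fiber W := [set p in pairings n r | crossing p == W].

Lemma pairing_involutive p : p \in pairings n r -> involutive p /\ (forall x, p x != x).
Proof. by rewrite inE => /forallP H; split => x; case/andP: (H x) => /eqP. Qed.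

Lemma eout_crossing p : p \in pairings n r -> eout p U = #|crossing p|.
Proof.
move=> /pairing_involutive [pK _]; rewrite /eout -(card_imset _ (@perm_inj _ p)).
apply: eq_card => y; apply/imsetP/idP => [[x]|].
  by rewrite !inE => /andP [xU pxU] ->; rewrite pK pxU xU.
by rewrite inE => /andP [yU pyU]; exists (p y); rewrite ?inE pK ?pyU ?yU.
Qed.

Lemma bdry_crossing p : p \in pairings n r -> bdry p U = owners (crossing p).
Proof.
move=> /pairing_involutive [pK _]; apply/setP => y; rewrite !inE; apply/andP/imsetP.
  case=> yU /existsP [x /andP [xU /eqP pxy]].
  by exists (p x); rewrite ?inE pxy ?yU ?pK.
case=> z; rewrite inE => /andP [zU pzU] ->; split => //.
by apply/existsP; exists (p z); rewrite pzU pK eqxx.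
Qed.

Lemma crossing_sub p : crossing p \subset out_half.
Proof. by apply/subsetP => y; rewrite !inE => /andP []. Qed.

Lemma eout_le p : (eout p U <= #|U| * r)%N.
Proof.
rewrite -[X in (_ <= _ * X)%N]card_ord -cardsT -cardsX; apply: subset_leq_card.
by apply/subsetP => -[v j]; rewrite !inE => /andP [-> _].
Qed.

Lemma pairings_conj p s : p \in pairings n r -> (p ^ s)%g \in pairings n r.
Proof.
move=> /pairing_involutive [pK pfix]; rewrite inE; apply/forallP => x; rewrite !permJE.
by rewrite permK pK permKV eqxx -(inj_eq (@perm_inj _ (s^-1)%g)) permK pfix.
Qed.

Lemma crossing_conj p s : (forall x, ((s x).1 \in U) = (x.1 \in U)) ->
  crossing (p ^ s)%g = s @: crossing p.
Proof.
move=> sU; apply/setP => y; rewrite -{2}(permKV s y) mem_imset; last exact: perm_inj.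
by rewrite !inE permJE sU -{1}(permKV s y) sU.
Qed.

(* Conjugating by the transposition of two outside half-edges is a bijection
   between the two fibers, since it fixes the side of U of every half-edge. *)
Lemma card_crossing_fiber_tperm a b W : a \in out_half -> b \in out_half ->
  #|crossing_fiber W| = #|crossing_fiber (tperm a b @: W)|.
Proof.
rewrite !inE => /negbTE aU /negbTE bU.
have tU x : ((tperm a b x).1 \in U) = (x.1 \in U).
  by case: tpermP => [->|->|]; rewrite ?aU ?bU.
have le V : (#|crossing_fiber V| <= #|crossing_fiber (tperm a b @: V)|)%N.
  rewrite -(card_imset _ (conjg_inj (tperm a b))); apply: subset_leq_card.
  apply/subsetP => q /imsetP [p]; rewrite inE => /andP [pP /eqP pV] ->.
  by rewrite inE pairings_conj //= crossing_conj // pV.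
by apply/eqP; rewrite eqn_leq le /= -{2}(imset_tpermK a b W) le.
Qed.

Lemma card_crossing_fiber_eq W W' : W \subset out_half -> W' \subset out_half ->
  #|W| = #|W'| -> #|crossing_fiber W| = #|crossing_fiber W'|.
Proof.
move Ed : #|W :\: W'| => d; elim: d W Ed => [|d IH] W Ed sW sW' cW.
  suff -> : W = W' by [].
  by apply/eqP; rewrite eqEcard cW leqnn andbT -setD_eq0 -cards_eq0 Ed.
have [a] : exists a, a \in W :\: W' by apply/set0Pn; rewrite -card_gt0 Ed.
rewrite inE => /andP [aW' aW].
have cD : #|W' :\: W| = #|W :\: W'|.
  by apply/eqP; rewrite -(eqn_add2l #|W :&: W'|) cardsID setIC cardsID cW.
have [b] : exists b, b \in W' :\: W by apply/set0Pn; rewrite -card_gt0 cD Ed.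
rewrite inE => /andP [bW bW'].
have aO := subsetP sW a aW; have bO := subsetP sW' b bW'.
rewrite (card_crossing_fiber_tperm W aO bO).
apply: IH => //.
- suff -> : tperm a b @: W :\: W' = (W :\: W') :\ a.
    by move: Ed; rewrite (cardsD1 a) inE aW' aW => -[].
  apply/setP => y; rewrite !inE mem_imset_tperm.
  case: tpermP => [->|->|ya _]; first by rewrite eqxx (negbTE bW) andbF.
    by rewrite bW' (negbTE bW) !andbF.
  by have -> : y != a by apply/eqP.
- apply/subsetP => y; rewrite mem_imset_tperm.
  by case: tpermP => [->|->|] // _ _ /(subsetP sW).
- by rewrite card_imset //; exact: perm_inj.
Qed.

Definition crossing_event (k : nat) (G : pred nat) : {set {perm half n r}} :=
  [set p in pairings n r | (#|crossing p| == k) && G #|owners (crossing p)|].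

Definition crossing_sets (k : nat) (G : pred nat) : {set {set half n r}} :=
  [set W : {set half n r} | [&& W \subset out_half, #|W| == k & G #|owners W|]].

Lemma card_crossing_event k G :
  #|crossing_event k G| = (\sum_(W in crossing_sets k G) #|crossing_fiber W|)%N.
Proof.
rewrite -sum1_card (partition_big crossing (fun W => W \in crossing_sets k G)) => [|p].
  apply: eq_bigr => W; rewrite inE => /and3P [_ /eqP cW GW].
  rewrite sum1dep_card; apply: eq_card => p; rewrite !inE.
  by case: (crossing p =P W) => [->|]; rewrite ?andbF // cW GW eqxx !andbT.
by rewrite inE => /andP [_ kG]; rewrite /= inE crossing_sub.
Qed.

Lemma crossing_event_uniform k : exists c, forall G,
  #|crossing_event k G| = (c * #|crossing_sets k G|)%N.
Proof.
case: (pickP (fun W => W \in crossing_sets k predT)) => [W0 W0k|none].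
  exists #|crossing_fiber W0| => G; rewrite card_crossing_event mulnC -sum_nat_const.
  apply: eq_bigr => W; rewrite !inE => /and3P [sW /eqP cW _].
  move: W0k; rewrite !inE andbT => /andP [sW0 /eqP cW0].
  by apply: card_crossing_fiber_eq; rewrite ?cW ?cW0.
exists 0%N => G; rewrite card_crossing_event big1 // => W; rewrite !inE.
by move=> /and3P [sW cW _]; move: (none W); rewrite /= !inE sW cW.
Qed.

Lemma card_out_half : #|out_half| = ((n - #|U|) * r)%N.
Proof.
have -> : out_half = setX (~: U) [set: 'I_r] by apply/setP => x; rewrite !inE andbT.
by rewrite cardsX cardsT cardsCs setCK !card_ord.
Qed.

Lemma card_crossing_sets_all k : #|crossing_sets k predT| = 'C((n - #|U|) * r, k).
Proof. by rewrite -card_out_half -cards_draws; apply: eq_card => W; rewrite !inE andbT. Qed.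

(* A k-set of half-edges owned by j vertices is chosen by the j owners and a
   subset of their j r half-edges. *)
Lemma card_crossing_sets_le k G : (#|crossing_sets k G| <=
  \sum_(j < k.+1 | G j) 'C(n, j) * 2 ^ (j * r))%N.
Proof.
rewrite -sum1_card (partition_big owners
   (fun V : {set 'I_n} => (#|V| < k.+1)%N && G #|V|)) => [|W]; last first.
  rewrite inE => /and3P [_ /eqP cW GW]; rewrite GW andbT ltnS -cW.
  exact: leq_imset_card.
apply: (@leq_trans (\sum_(V : {set 'I_n} | (#|V| < k.+1)%N && G #|V|) 2 ^ (#|V| * r))).
  apply: leq_sum => V _; rewrite sum1dep_card.
  rewrite -[r in 2 ^ (_ * r)]card_ord -cardsT -cardsX -card_powerset.
  apply: subset_leq_card; apply/subsetP => W; rewrite !inE => /andP [_ /eqP <-].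
  by apply/subsetP => y yW; rewrite !inE andbT; apply/imsetP; exists y.
rewrite (partition_big (fun V : {set 'I_n} => inord #|V| : 'I_k.+1) G) => [|V]; last first.
  by move=> /andP [Vk GV]; rewrite inordK.
apply: leq_sum => j Gj; rewrite -[n in 'C(n, _)]card_ord -card_draws -sum_nat_const.
rewrite big_mkcond [X in (_ <= X)%N]big_mkcond /=.
apply: leq_sum => V _; case: ifP => // /andP [/andP [Vk _] /eqP Vj].
by rewrite inE -Vj inordK // eqxx.
Qed.

Lemma crossing_event_eq k (F : pred {perm half n r}) G :
  {in pairings n r, forall p, F p = (eout p U == k) && G #|bdry p U|} ->
  [set p in pairings n r | F p] = crossing_event k G.
Proof.
move=> HF; apply/setP => p; rewrite !inE.
have [pP|] := boolP (p \in pairings n r); last by rewrite inE => /negbTE ->.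
by move: (pP); rewrite inE => -> /=; rewrite HF // eout_crossing // bdry_crossing.
Qed.

Lemma card_pairings_by_eout (F : nat -> pred nat) :
  #|[set p in pairings n r | F (eout p U) #|bdry p U|]| =
  (\sum_(k < (#|U| * r).+1) #|crossing_event k (F k)|)%N.
Proof.
rewrite -sum1_card (partition_big (fun p => inord (eout p U) : 'I_(#|U| * r).+1) predT) //.
apply: eq_bigr => k _; rewrite sum1dep_card; apply: eq_card => p; rewrite !inE.
have [pP|] := boolP (p \in pairings n r); last by rewrite inE => /negbTE ->.
move: (pP); rewrite inE => -> /=.
rewrite -(inj_eq val_inj) /= inordK ?ltnS ?eout_le // eout_crossing // bdry_crossing //.
by case: eqP => [->|]; rewrite ?andbF ?andbT.
Qed.

End CrossingHalfEdges.

Lemma ffact_leq_expn n j : n ^_ j <= n ^ j.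
Proof.
elim: j => [|j IH]; first by rewrite ffactn0.
by rewrite ffactnSr expnSr leq_mul // leq_subr.
Qed.

Lemma leq_exp2rW m n e : m <= n -> m ^ e <= n ^ e.
Proof. by move=> mn; elim: e => // e IH; rewrite !expnS leq_mul. Qed.

Lemma expn_leq_ffact k N : k <= N -> (N - k).+1 ^ k <= N ^_ k.
Proof.
elim: k N => [|k IH] [|N] //= kN.
rewrite ffactSS expnS subSS leq_mul ?IH //.
by rewrite ltnS leq_subr.
Qed.

Lemma fact_addn_leq j d : (j + d)`! <= j`! * (j + d) ^ d.
Proof.
elim: d => [|d IH]; first by rewrite addn0 muln1.
rewrite addnS factS expnS mulnCA leq_mul //.
by apply: (leq_trans IH); rewrite leq_mul // leq_exp2rW.
Qed.

(* Multiplying by j`! k`! turns both sides into falling factorials; then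
   n^_j n^(k-j) <= n^k <= (2 (N-k+1))^k <= 2^k N^_k and k`! <= j`! k^(k-j). *)
Lemma bin_expn_leq n N j k : j <= k -> k <= N -> n <= 2 * (N - k).+1 ->
  'C(n, j) * n ^ (k - j) <= 2 ^ k * 'C(N, k) * k ^ (k - j).
Proof.
move=> jk kN nN.
rewrite -(leq_pmul2r (fact_gt0 j)) -(leq_pmul2r (fact_gt0 k)).
have -> : 'C(n, j) * n ^ (k - j) * j`! * k`! = n ^_ j * n ^ (k - j) * k`!.
  by rewrite -bin_ffact; ring.
have -> : 2 ^ k * 'C(N, k) * k ^ (k - j) * j`! * k`! =
          2 ^ k * N ^_ k * (j`! * k ^ (k - j)).
  by rewrite -bin_ffact; ring.
apply: (@leq_trans (n ^ k * k`!)).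
  by rewrite leq_mul // -{2}(subnKC jk) expnD leq_mul // ffact_leq_expn.
apply: (@leq_trans (2 ^ k * (N - k).+1 ^ k * k`!)).
  by rewrite -expnMn leq_mul // leq_exp2rW.
rewrite leq_mul ?leq_mul ?expn_leq_ffact //.
by move: (fact_addn_leq j (k - j)); rewrite subnKC.
Qed.

Local Open Scope ring_scope.

Section RealBounds.

Variable R : realType.

Lemma exprn_le_expR (x a : R) (d : nat) :
  0 < x -> x <= 1 -> a <= d%:R -> x ^+ d <= expR (a * ln x).
Proof.
move=> x0 x1 ad.
rewrite -{1}(lnK (x0 : x \in Num.pos)) -expRM_natl ler_expR.
by apply: ler_wnM2r => //; exact: ln_le0.
Qed.

Lemma expn2_expR (M : nat) : ((2 ^ M)%:R : R) = expR (M%:R * ln 2).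
Proof. by rewrite natrX expRM_natl lnK // posrE ltr0n. Qed.

Lemma bin_le_bin_expr (n N a j k : nat) : (0 < n)%N -> (k <= a)%N ->
  (j <= k)%N -> (k <= N)%N -> (n <= 2 * (N - k).+1)%N ->
  ('C(n, j)%:R : R) <= (2 ^ k * 'C(N, k))%:R * (a%:R / n%:R) ^+ (k - j).
Proof.
move=> n0 ka jk kN nN.
have nd : 0 < (n%:R : R) ^+ (k - j) by rewrite exprn_gt0 // ltr0n.
rewrite -(ler_pM2r nd); apply: (@le_trans _ _ ((2 ^ k * 'C(N, k))%:R * k%:R ^+ (k - j))).
  by rewrite -!natrX -!natrM ler_nat bin_expn_leq.
rewrite -mulrA ler_wpM2l // -exprMn divfK ?pnatr_eq0 -?lt0n //.
by rewrite lerXn2r ?nnegrE // ler_nat.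
Qed.

Definition delta (r : nat) : R := (r * (r + 2))%:R * ln 2 + r%:R * ln r%:R.

Lemma delta_gt0 r : (0 < r)%N -> 0 < delta r.
Proof.
move=> r0; apply: ltr_wpDr; first by rewrite mulr_ge0 ?ler0n ?ln_ge0 ?ler1n.
by rewrite mulr_gt0 ?ln_gt0 ?ltr1n // ltr0n; lia.
Qed.

Section SmallSet.

Variables (n m r k : nat) (eta : R).
Hypotheses (m0 : (0 < m)%N) (nm : (4 * r * m < n)%N) (r0 : (0 < r)%N)
  (km : (k <= m * r)%N) (eta0 : 0 < eta).

(* With x = r m / n, a boundary deficit of eta m costs x^(eta m): this is
   where the factor (n / m)^(- eta m) comes from. *)
Lemma small_boundary_term_le j : (j <= k)%N -> eta * m%:R <= k%:R - j%:R ->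
  (('C(n, j) * 2 ^ (j * r))%:R : R) <=
  (2 ^ (k * r + k) * 'C((n - m) * r, k))%:R *
   expR (r%:R * m%:R * ln r%:R - eta * m%:R * ln (n%:R / m%:R)).
Proof.
move=> jk Hd.
set x : R := (r * m)%:R / n%:R.
have mR : 0 < (m%:R : R) by rewrite ltr0n.
have nR : 0 < (n%:R : R) by rewrite ltr0n; lia.
have rR : 1 <= (r%:R : R) by rewrite ler1n.
have x0 : 0 < x by rewrite divr_gt0 // ltr0n muln_gt0 r0.
have x1 : x <= 1 by rewrite ler_pdivrMr // mul1r ler_nat; lia.
have lnx : ln x = ln r%:R - ln (n%:R / m%:R).
  have rR0 : 0 < (r%:R : R) by rewrite ltr0n.
  rewrite /x natrM ln_div ?posrE ?mulr_gt0 // lnM ?posrE // ln_div ?posrE //.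
  ring.
have eta_r : eta <= r%:R.
  rewrite -(ler_pM2r mR) -natrM; apply: (le_trans Hd).
  by rewrite lerBlDr -natrD ler_nat mulnC; lia.
have xd : x ^+ (k - j) <=
    expR (r%:R * m%:R * ln r%:R - eta * m%:R * ln (n%:R / m%:R)).
  apply: (le_trans (exprn_le_expR (a := eta * m%:R) x0 x1 _)); first by rewrite natrB.
  by rewrite ler_expR lnx mulrBr lerD2r ler_wpM2r ?ln_ge0 // ler_wpM2r.
have Cx : ('C(n, j)%:R : R) <= (2 ^ k * 'C((n - m) * r, k))%:R * x ^+ (k - j).
  by apply: bin_le_bin_expr => //; nia.
set E := expR _ in xd *.
apply: (@le_trans _ _ ((2 ^ k * 'C((n - m) * r, k))%:R * E * (2 ^ (k * r))%:R)).
  rewrite natrM; apply: ler_pM.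
  - exact: ler0n.
  - exact: ler0n.
  - by apply: (le_trans Cx); rewrite ler_wpM2l.
  - by rewrite ler_nat leq_pexp2l // leq_mul2r jk orbT.
rewrite mulrAC -natrM ler_wpM2r ?expR_ge0 // ler_nat expnD.
by rewrite mulnC mulnA.
Qed.

Lemma sum_small_boundary_le (G : pred nat) :
  (forall j, G j -> (j <= k)%N -> eta * m%:R <= k%:R - j%:R) ->
  ((\sum_(j < k.+1 | G j) 'C(n, j) * 2 ^ (j * r))%:R : R) <=
  expR (- (eta * m%:R * ln (n%:R / m%:R)) + delta r * m%:R) *
  'C((n - m) * r, k)%:R.
Proof.
move=> HG.
set a := r%:R * m%:R * ln r%:R - eta * m%:R * ln (n%:R / m%:R).
set T := (2 ^ (k * r + k) * 'C((n - m) * r, k))%:R * expR a.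
rewrite natr_sum; apply: (@le_trans _ _ (\sum_(j < k.+1) T)).
  rewrite [X in X <= _]big_mkcond /=; apply: ler_sum => j _.
  case: ifP => Gj; last by rewrite /T mulr_ge0 // expR_ge0.
  have jk : (j <= k)%N by rewrite -ltnS.
  by apply: (small_boundary_term_le jk); apply: HG.
have Hk : (2 ^ (k * r + k) * k.+1 <= 2 ^ (m * r * (r + 2)))%N.
  apply: (@leq_trans (2 ^ (k * r + k) * 2 ^ k)).
    by rewrite leq_mul2l ltn_expl // orbT.
  by rewrite -expnD leq_pexp2l //; nia.
rewrite sumr_const card_ord /T -mulrnAl -mulr_natr -natrM.
apply: (@le_trans _ _ ((2 ^ (m * r * (r + 2)) * 'C((n - m) * r, k))%:R * expR a)).
  by rewrite ler_wpM2r ?expR_ge0 // ler_nat mulnAC leq_mul2r Hk orbT.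
rewrite natrM expn2_expR mulrAC -expRD mulrC [X in _ <= X]mulrC ler_wpM2l //.
by rewrite ler_expR /a /delta !natrM natrD le_eqVlt; apply/orP; left; apply/eqP; ring.
Qed.

End SmallSet.

Lemma card_crossing_event_le n m r k (U : {set 'I_n}) (eta : R) (G : pred nat) :
  #|U| = m -> (0 < m)%N -> (4 * r * m < n)%N -> (0 < r)%N -> (k <= m * r)%N ->
  0 < eta -> (forall j, G j -> (j <= k)%N -> eta * m%:R <= k%:R - j%:R) ->
  (#|crossing_event r U k G|%:R : R) <=
  expR (- (eta * m%:R * ln (n%:R / m%:R)) + delta r * m%:R) *
  #|crossing_event r U k predT|%:R.
Proof.
move=> Um m0 nm r0 km eta0 HG; have [c Hc] := crossing_event_uniform r U k.
rewrite !Hc !natrM card_crossing_sets_all Um mulrCA ler_wpM2l //.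
apply: le_trans (sum_small_boundary_le m0 nm r0 km eta0 HG).
by rewrite ler_nat card_crossing_sets_le.
Qed.

Lemma nat_ratio_le (a b : nat) (B : R) :
  0 <= B -> a%:R <= B * b%:R -> a%:R / b%:R <= B.
Proof.
move=> B0 ab; have [->|b0] := posnP b; first by rewrite invr0 mulr0.
by rewrite ler_pdivrMr ?ltr0n.
Qed.

End RealBounds.

Unset Implicit Arguments.

Theorem lemma4 (R : realType) (r : nat) (hr : (3 <= r)%N) :
  exists Delta2 : R, 0 < Delta2 /\
  forall eta : R, 0 < eta ->
  exists eps5 : R, 0 < eps5 /\
  exists N : nat, forall n : nat, (N <= n)%N -> ~~ odd (r * n) ->
  forall (m : nat), m%:R < eps5 * n%:R ->
  forall (U : {set 'I_n}), #|U| = m ->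
  forall u : R, eta < u -> u <= r%:R ->
  0 < @prob R n r (fun p => (eout p U)%:R == u * m%:R :> R) ->
  let bound := expR (- (eta * m%:R * ln (n%:R / m%:R)) + Delta2 * m%:R) in
  @cprob R n r (fun p => #|bdry p U|%:R <= (u - eta) * m%:R)
          (fun p => (eout p U)%:R == u * m%:R :> R) <= bound /\
  @prob R n r (fun p => (eout p U)%:R - #|bdry p U|%:R > eta * m%:R) <= bound.
Proof.
have r0 : (0 < r)%N by lia.
exists (delta R r); split; first exact: delta_gt0.
move=> eta eta0; exists (4 * r)%:R^-1; split; first by rewrite invr_gt0 ltr0n; lia.
exists 0%N => n _ _ m hm U Um u etau ur _ bound.
have nm : (4 * r * m < n)%N.
  by move: hm; rewrite mulrC ltr_pdivlMr ?ltr0n ?muln_gt0 // -natrM ltr_nat mulnC.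
have B0 : 0 <= bound by exact: expR_ge0.
have [m0|m0] := posnP m.
  have -> : bound = 1 by rewrite /bound m0 !mulr0 mul0r oppr0 add0r expR0.
  split; apply: nat_ratio_le; rewrite // mul1r ler_nat; apply: subset_leq_card;
    apply/subsetP => p; rewrite !inE; [by case/and3P => -> _ -> | by case/andP].
split.
- rewrite /cprob.
  have [Y0|[p0 p0Y]] :=
    set_0Vmem [set p in pairings n r | (eout p U)%:R == u * m%:R :> R].
    by rewrite Y0 cards0 invr0 mulr0.
  set k := eout p0 U.
  have kR : k%:R = u * m%:R :> R by move: p0Y; rewrite inE => /andP [_ /eqP].
  rewrite (@crossing_event_eq _ _ U k (fun p => (eout p U)%:R == u * m%:R) predT)
    => [|p _]; last by rewrite /= -kR eqr_nat andbT.
  rewrite (@crossing_event_eq _ _ U k _ (fun j => j%:R <= (u - eta) * m%:R))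
    => [|p _]; last by rewrite /= -kR eqr_nat andbC.
  apply: nat_ratio_le => //; apply: card_crossing_event_le => //.
    by rewrite -Um eout_le.
  by move=> j Gj _; rewrite kR; move: Gj; lra.
- rewrite /prob (card_pairings_by_eout r U (fun k j => eta * m%:R < k%:R - j%:R)).
  have -> : #|pairings n r| = #|[set p in pairings n r | true]|.
    by apply: eq_card => p; rewrite inE andbT.
  rewrite (card_pairings_by_eout r U (fun _ _ => true)); apply: nat_ratio_le => //.
  rewrite !natr_sum mulr_sumr; apply: ler_sum => k _.
  apply: card_crossing_event_le => //; first by rewrite -Um -ltnS.
  by move=> j Gj _; apply: ltW.
Qed.
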